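(* Let $G^\sigma$ be a lower-optimal oriented graph, let $y$ be a pendant vertex of $G$ with neighbor $x$, and let $H^\sigma=G^\sigma-y-x$. Then (i) $x$ does not lie on any cycle of $G$; (ii) $H^\sigma$ is lower-optimal.
   Context: An oriented graph $G^\sigma$ is obtained from a simple graph $G$ by assigning a direction to each edge. Its skew-adjacency matrix $S(G^\sigma)=[s_{x,y}]$ has $s_{x,y}=1$ if there is an arc from $x$ to $y$, $s_{x,y}=-1$ if there is an arc from $y$ to $x$, and $0$ otherwise; $sr(G^\sigma)$ is the rank of $S(G^\sigma)$. $\alpha(\cdot)$ is the independence number of the underlying graph. $d(G)=|E_G|-|V_G|+\omega(G)$, with $\omega(G)$ the number of components. For every oriented graph one has $sr(G^\sigma)+2\alpha(G)\geqslant 2|V_G|-2d(G)$, and $G^\sigma$ is called lower-optimal if equality holds. A pendant vertex has degree one. *)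

From HB Require Import structures.
From mathcomp Require Import all_boot all_order all_algebra.
Set Implicit Arguments. Unset Strict Implicit. Unset Printing Implicit Defensive.
Import Order.TTheory GRing.Theory Num.Theory.

(* An oriented graph G^sigma: vertex set V : {set T} inside a finite type T,
   arcs given by a relation o (o u v = "arc from u to v"); only arcs between
   vertices of V count. *)

Definition oriented (T : finType) (o : rel T) : Prop :=
  forall u v, o u v -> ~~ o v u.

Definition arc (T : finType) (o : rel T) (V : {set T}) (u v : T) : bool :=
  [&& u \in V, v \in V & o u v].

Definition adj (T : finType) (o : rel T) (V : {set T}) : rel T :=
  fun u v => arc o V u v || arc o V v u.

Definition skew_adj (T : finType) (o : rel T) (V : {set T}) : 'M[rat]_#|V| :=
  \matrix_(i < #|V|, j < #|V|)
    (if arc o V (enum_val i) (enum_val j) then 1%R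
     else if arc o V (enum_val j) (enum_val i) then (-1)%R else 0%R).

Definition skew_rank (T : finType) (o : rel T) (V : {set T}) : nat :=
  \rank (skew_adj o V).

Definition independent (T : finType) (o : rel T) (V S : {set T}) : bool :=
  (S \subset V) && [forall u in S, forall v in S, ~~ adj o V u v].

Definition alpha (T : finType) (o : rel T) (V : {set T}) : nat :=
  \max_(S : {set T} | independent o V S) #|S|.

(* number of edges (each edge of G carries exactly one arc) *)
Definition nedges (T : finType) (o : rel T) (V : {set T}) : nat :=
  #|[set p : T * T | arc o V p.1 p.2]|.

Definition ncomp (T : finType) (o : rel T) (V : {set T}) : nat :=
  n_comp (adj o V) (mem V).

Definition dim_cyc (T : finType) (o : rel T) (V : {set T}) : int :=
  (nedges o V)%:Z - (#|V|)%:Z + (ncomp o V)%:Z.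

Definition lower_optimal (T : finType) (o : rel T) (V : {set T}) : Prop :=
  ((skew_rank o V)%:Z + 2 * (alpha o V)%:Z
   = 2 * (#|V|)%:Z - 2 * dim_cyc o V)%R.

Definition degree (T : finType) (o : rel T) (V : {set T}) (u : T) : nat :=
  #|[set v | adj o V u v]|.

Definition on_cycle (T : finType) (o : rel T) (V : {set T}) (u : T) : Prop :=
  exists c : seq T, [&& 3 <= size c, uniq c, cycle (adj o V) c & u \in c].

(* Write q(G) = |E| + ω(G), so that the lower bound reads sr + 2α + 2q >= 4|V|,
   with slack [lower_gap]. Deleting a vertex v lowers q by at least 1, and by at
   least 2 when v lies on a cycle, because the neighbours of v then meet at most
   deg v - 1 components of G - v. Deleting an isolated vertex also lowers α by 1;
   deleting a pendant vertex y together with its neighbour x lowers sr by 2 (the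
   entries s_yx and s_xy are pivots of the skew-adjacency matrix), α by 1 and q
   by 2. So none of these deletions increases the slack, and since a graph of
   minimum degree 2 has a cycle, induction on |V| proves the bound. For a
   lower-optimal G the slack of G - y - x is therefore 0; if x were on a cycle,
   q would drop by 3 and the slack would become negative. *)

From Pilot Require Import Defs.
From mathcomp Require Import all_boot all_order all_algebra zify.
(* [path] also defines an [arc], which hides the one of [Defs]. *)
Import Defs.
Import Order.TTheory GRing.Theory.
Set Implicit Arguments. Unset Strict Implicit. Unset Printing Implicit Defensive.

Section Matrices.
Local Open Scope ring_scope.
Variable F : fieldType.

Lemma mxrank_mxsub m n m' n' (f : 'I_m' -> 'I_m) (g : 'I_n' -> 'I_n)
    (A : 'M[F]_(m, n)) :
  (\rank (mxsub f g A) <= \rank A)%N.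
Proof.
rewrite -[A in mxsub _ _ A]mulmx1 mxsub_mul rowsubE.
exact: leq_trans (mxrankM_maxl _ _) (mxrankM_maxr _ _).
Qed.

Lemma mxrank_pivot_row m n (A : 'M[F]_(1 + m, 1 + n)) :
  ursubmx A = 0 -> ulsubmx A != 0 -> (1 + \rank (drsubmx A) <= \rank A)%N.
Proof.
move=> urA0 ulA_neq0; set a := ulsubmx A; set C := dlsubmx A.
set c := a 0 0; have ac : a = c%:M := mx11_scalar a.
have c_neq0 : c != 0 by apply: contraNneq ulA_neq0 => c0; rewrite -/a ac c0 raddf0.
pose L := block_mx 1%:M 0 (- (c^-1 *: C)) 1%:M.
have LA : L *m A = block_mx a 0 0 (drsubmx A).
  rewrite -[A in L *m A]submxK urA0 mulmx_block !mul1mx !mul0mx !mulmx0 !addr0.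
  rewrite add0r; congr block_mx.
  by rewrite -/a -/C ac mulNmx -scalemxAl mul_mx_scalar scalerA
             mulVf // scale1r addNr.
have rank_a : \rank a = 1%N.
  by apply/eqP; rewrite eqn_leq rank_leq_row lt0n mxrank_eq0.
by rewrite -[X in (X + _)%N]rank_a -rank_diag_block_mx -LA mxrankM_maxr.
Qed.

Lemma mxrank_pivot_col m n (A : 'M[F]_(1 + m, 1 + n)) :
  dlsubmx A = 0 -> ulsubmx A != 0 -> (1 + \rank (drsubmx A) <= \rank A)%N.
Proof.
move=> dlA0 ulA_neq0; rewrite -mxrank_tr -[X in (_ <= X)%N]mxrank_tr trmx_drsub.
apply: mxrank_pivot_row; first by rewrite -trmx_dlsub dlA0 trmx0.
by rewrite -trmx_ulsub trmx_eq0.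
Qed.

Lemma mxrank_two_pivots m n (A : 'M[F]_(1 + (1 + m), 1 + (1 + n))) :
  ursubmx A = 0 -> dlsubmx (drsubmx A) = 0 ->
  ulsubmx A != 0 -> ulsubmx (drsubmx A) != 0 ->
  (2 + \rank (drsubmx (drsubmx A)) <= \rank A)%N.
Proof.
move=> urA0 dlD0 ulA_neq0 ulD_neq0.
apply: leq_trans (mxrank_pivot_row urA0 ulA_neq0).
by rewrite -[2%N]/(1 + 1)%N -addnA leq_add2l mxrank_pivot_col.
Qed.

End Matrices.

Section OrdCons.
Variables (A : Type) (a : A) (k : nat) (f : 'I_k -> A).

Definition ord_cons (i : 'I_(1 + k)) : A := if split i is inr j then f j else a.

Lemma ord_cons_lshift (i : 'I_1) : ord_cons (lshift k i) = a.
Proof. by rewrite /ord_cons (unsplitK (inl i)). Qed.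

Lemma ord_cons_rshift (j : 'I_k) : ord_cons (rshift 1 j) = f j.
Proof. by rewrite /ord_cons (unsplitK (inr j)). Qed.

Lemma ord_consP (P : A -> Prop) : P a -> (forall j, P (f j)) -> forall i, P (ord_cons i).
Proof. by move=> Pa Pf i; rewrite /ord_cons; case: split. Qed.

End OrdCons.

Section OrientedGraph.
Variables (T : finType) (o : rel T).
Hypothesis o_oriented : oriented o.
Implicit Types (V W S : {set T}) (a b u v w x y : T).

Lemma adjC V u v : adj o V u v = adj o V v u.
Proof. by rewrite /adj orbC. Qed.

Lemma adj_mem V u v : adj o V u v -> (u \in V) && (v \in V).
Proof. by case/orP=> /and3P[-> ->]. Qed.

Lemma adj_irrefl V u : ~~ adj o V u u.
Proof.
by rewrite /adj /arc orbb; apply/and3P=> -[_ _ ouu]; case/negP: (o_oriented ouu).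
Qed.

Lemma connect_sym_adj V : connect_sym (adj o V).
Proof. exact/sym_connect_sym/adjC. Qed.

Lemma connect_adj_mem V u v : connect (adj o V) u v -> u \in V -> v \in V.
Proof.
have closedV : closed (adj o V) (mem V) by move=> a b /adj_mem /andP[-> ->].
by move=> uv uV; rewrite -(closed_connect closedV uv).
Qed.

Lemma arcD1 V v a b : arc o (V :\ v) a b = [&& a != v, b != v & arc o V a b].
Proof. by rewrite /arc !in_setD1; case: (a != v); case: (b != v); rewrite ?andbF. Qed.

Lemma adjD1 V v a b : adj o (V :\ v) a b = [&& a != v, b != v & adj o V a b].
Proof. by rewrite /adj !arcD1; case: (a != v); case: (b != v). Qed.

Lemma arc_subset V W a b :
  W \subset V -> a \in W -> b \in W -> arc o W a b = arc o V a b.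
Proof. by move=> /subsetP sWV aW bW; rewrite /arc aW bW !sWV. Qed.

Lemma adj_subset V W a b :
  W \subset V -> a \in W -> b \in W -> adj o W a b = adj o V a b.
Proof. by move=> sWV aW bW; rewrite /adj !(arc_subset sWV). Qed.

Lemma degree1_adjE V y x : degree o V y = 1 -> adj o V y x -> adj o V y =1 pred1 x.
Proof.
move=> /eqP/cards1P[x' Nx'] yx w; have Nw u : adj o V y u = (u == x').
  by rewrite -in_set1 -Nx' inE.
by rewrite /= Nw; move: yx; rewrite Nw => /eqP->.
Qed.

Lemma on_cycle_nbrs V v : on_cycle o V v ->
  exists u1 u2, [/\ adj o V v u1, adj o V v u2, u1 != u2 &
                    connect (adj o (V :\ v)) u1 u2].
Proof.
case=> c /and4P[c_ge3 c_uniq c_cycle vc].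
have [i s rot_c] := rot_to vc.
move: c_ge3 c_uniq c_cycle; rewrite -(size_rot i) -(rot_uniq i) -(rot_cycle i) rot_c.
case: s rot_c => [|u1 [|a s]] //= _ _ /and4P[vs u1s _ _] /and3P[vu1 u1a].
rewrite rcons_path => /andP[a_path last_v].
exists u1, (last a s); split=> //; first by rewrite adjC.
  by apply: contraNneq u1s => ->; rewrite mem_last.
have avoid_v : all (predC1 v) [:: u1, a & s].
  by apply/allP=> z zs; apply: contraNneq vs => <-.
apply/connectP; exists (a :: s) => //=.
move: avoid_v => /= /andP[u1v a_avoid]; have /andP[av _] := a_avoid.
rewrite adjD1 u1v av u1a /=.
apply: (sub_in_path _ a_avoid a_path) => b w /[!inE] bv wv.
by rewrite adjD1 bv wv.
Qed.

Definition nbr_comps V v : {set T} :=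
  [set fingraph.root (adj o (V :\ v)) u | u in [set u | adj o V v u]].

Lemma nbr_comps_le_degree V v : #|nbr_comps V v| <= degree o V v.
Proof. exact: leq_imset_card. Qed.

Lemma nbr_comps_lt_degree V v : on_cycle o V v -> #|nbr_comps V v| < degree o V v.
Proof.
case/on_cycle_nbrs=> u1 [u2 [vu1 vu2 u12 c12]].
set e' := adj o (V :\ v).
have sub : nbr_comps V v \subset
           [set fingraph.root e' u | u in [set u | adj o V v u] :\ u2].
  apply/subsetP=> _ /imsetP[u /[!inE] vu ->]; have [->|neq_u2] := eqVneq u u2.
    by rewrite -(fingraph.rootP (connect_sym_adj _) c12) imset_f // !inE u12.
  by rewrite imset_f // !inE neq_u2.
apply: leq_ltn_trans (subset_leq_card sub) _.
by rewrite /degree [X in _ < X](cardsD1 u2) inE vu2 add1n ltnS leq_imset_card.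
Qed.

Lemma connect_delv V v a w :
  (forall u, adj o V v u -> ~~ connect (adj o (V :\ v)) a u) -> a != v ->
  connect (adj o V) a w -> (w != v) && connect (adj o (V :\ v)) a w.
Proof.
move=> far av /connectP[p + ->]; set e' := adj o (V :\ v).
suff: forall b, (b != v) && connect e' a b -> path (adj o V) b p ->
                (last b p != v) && connect e' a (last b p).
  by apply; rewrite av connect0.
elim: p => [|c p IH] b /andP[bv ab] /=; first by rewrite bv ab.
case/andP=> bc cp; apply: IH cp.
have cv : c != v by apply: contraTneq ab => c_v; apply: far; rewrite -c_v adjC.
by rewrite cv (connect_trans ab) // connect1 // /e' adjD1 bv cv bc.
Qed.

Lemma ncomp_delv V v : v \in V -> ncomp o (V :\ v) < ncomp o V + #|nbr_comps V v|.
Proof.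
move=> vV; set e := adj o V; set e' := adj o (V :\ v).
have ncompE W : ncomp o W = #|[set r in W | roots (adj o W) r]|.
  by apply: eq_card => r; rewrite !inE andbC.
rewrite !ncompE; set R := [set r in V | _]; set R' := [set r in V :\ v | _].
set A := nbr_comps V v; set B := R' :\: A.
have B_props r : r \in B -> [/\ r \notin A, r != v, r \in V & fingraph.root e' r = r].
  by rewrite !inE => /and3P[-> /andP[-> ->] /eqP].
(* A component of G - v avoiding the neighbours of v is a component of G. *)
have far r : r \in B -> forall u, adj o V v u -> ~~ connect e' r u.
  move=> /B_props[rA _ _ rr] u vu; apply: contra rA => ru.
  apply/imsetP; exists u; first by rewrite inE.
  by rewrite -{1}rr; apply/(fingraph.rootP (connect_sym_adj _)).
have inj : {in B &, injective (fingraph.root e)}.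
  move=> r1 r2 r1B /B_props[_ _ _ rr2] /(fingraph.rootP (connect_sym_adj _)) c12.
  have [_ r1v _ rr1] := B_props r1 r1B.
  have /andP[_ c'12] := connect_delv (far r1 r1B) r1v c12.
  by rewrite -rr1 -rr2; apply/(fingraph.rootP (connect_sym_adj _)).
have rootv : fingraph.root e v \in R.
  have rootvV := connect_adj_mem (connect_root e v) vV.
  by rewrite inE rootvV roots_root //; apply: connect_sym_adj.
have sub : [set fingraph.root e r | r in B] \subset R :\ fingraph.root e v.
  apply/subsetP=> _ /imsetP[r rB ->]; have [_ rv rV _] := B_props r rB.
  have rootrV := connect_adj_mem (connect_root e r) rV.
  rewrite !inE rootrV roots_root ?andbT; last exact: connect_sym_adj.
  apply/negP=> /eqP /(fingraph.rootP (connect_sym_adj _)) rv_conn.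
  by have := connect_delv (far r rB) rv rv_conn; rewrite eqxx.
have ltBR : #|B| < #|R|.
  rewrite -(card_in_imset inj) (cardsD1 (fingraph.root e v) R) rootv add1n ltnS.
  exact: subset_leq_card.
have leR' : #|R'| <= #|A| + #|B|.
  apply: leq_trans (leq_card_setU A B); apply: subset_leq_card.
  by apply/subsetP=> r rR; rewrite in_setU in_setD rR andbT orbN.
lia.
Qed.

Lemma nedges_delv V v : nedges o (V :\ v) + degree o V v <= nedges o V.
Proof.
set P' := [set p : T * T | arc o (V :\ v) p.1 p.2].
set P := [set p : T * T | arc o V p.1 p.2].
set Q := [set p in P | (p.1 == v) || (p.2 == v)].
have degQ : degree o V v <= #|Q|.
  pose other (p : T * T) := if p.1 == v then p.2 else p.1.
  apply: leq_trans (leq_imset_card other Q); apply: subset_leq_card.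
  apply/subsetP=> u /[!inE] vu; have uv : u != v.
    by apply: contraTneq vu => ->; apply: adj_irrefl.
  apply/imsetP; case/orP: vu => [vu|uv'].
    by exists (v, u); rewrite /other /= ?eqxx // !inE vu eqxx.
  by exists (u, v); rewrite /other /= ?(negbTE uv) // !inE uv' eqxx orbT.
have disjP'Q : P' :&: Q = set0.
  apply/setP=> p; rewrite !inE arcD1.
  by case: (p.1 == v); case: (p.2 == v); rewrite ?andbF.
have subP : P' :|: Q \subset P.
  by apply/subsetP=> p; rewrite !inE arcD1 => /orP[/and3P[_ _ ->]|/andP[->]].
rewrite /nedges -/P -/P'; apply: leq_trans (subset_leq_card subP).
by rewrite cardsU disjP'Q cards0 subn0 leq_add2l.
Qed.

Lemma nedges_ncomp_delv V v : v \in V ->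
  nedges o (V :\ v) + ncomp o (V :\ v) < nedges o V + ncomp o V.
Proof.
move=> vV; have := ncomp_delv vV; have := nbr_comps_le_degree V v.
have := nedges_delv V v; lia.
Qed.

Lemma on_cycle_mem V v : on_cycle o V v -> v \in V.
Proof. by case/on_cycle_nbrs=> u [_ [/adj_mem /andP[vV _] _ _ _]]. Qed.

Lemma nedges_ncomp_delv_cycle V v : on_cycle o V v ->
  nedges o (V :\ v) + ncomp o (V :\ v) + 2 <= nedges o V + ncomp o V.
Proof.
move=> v_cyc; have := ncomp_delv (on_cycle_mem v_cyc); have := nbr_comps_lt_degree v_cyc.
have := nedges_delv V v; lia.
Qed.

Lemma card_le_alpha V S : independent o V S -> #|S| <= alpha o V.
Proof. exact: (@leq_bigmax_cond _ (independent o V) (fun S => #|S|)). Qed.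

Lemma alpha_witness V : exists2 S, independent o V S & #|S| = alpha o V.
Proof.
have indep0 : independent o V set0.
  by rewrite /independent sub0set; apply/forall_inP=> u; rewrite inE.
have : 0 < #|independent o V| by apply/card_gt0P; exists set0.
case/(eq_bigmax_cond (fun S : {set T} => #|S|))=> S SI max_S.
by exists S => //; rewrite /alpha max_S.
Qed.

Lemma independent_subset V W S : W \subset V -> independent o W S -> independent o V S.
Proof.
move=> sWV /andP[sSW /forall_inP SI]; rewrite /independent (subset_trans sSW sWV).
apply/forall_inP=> u uS; apply/forall_inP=> w wS.
by rewrite -(adj_subset sWV) ?(subsetP sSW) //; move/forall_inP: (SI u uS); apply.
Qed.

Lemma alpha_subset V W : W \subset V -> alpha o W <= alpha o V.
Proof.
by move=> sWV; have [S SI <-] := alpha_witness W; apply/card_le_alpha/(independent_subset sWV).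
Qed.

Lemma alpha_lt_nonadj V W v : W \subset V -> v \in V -> v \notin W ->
  (forall u, u \in W -> ~~ adj o V v u) -> alpha o W < alpha o V.
Proof.
move=> sWV vV vW v_nonadj; have [S /andP[sSW /forall_inP SI] <-] := alpha_witness W.
have vS : v \notin S by apply: contra vW; apply: (subsetP sSW).
have -> : #|S|.+1 = #|v |: S| by rewrite cardsU1 vS.
apply: card_le_alpha; apply/andP; split.
  by rewrite subUset sub1set vV (subset_trans sSW sWV).
apply/forall_inP=> a /setU1P[->|aS]; apply/forall_inP=> b /setU1P[->|bS].
- exact: adj_irrefl.
- exact/v_nonadj/(subsetP sSW).
- by rewrite adjC; apply/v_nonadj/(subsetP sSW).
by rewrite -(adj_subset sWV) ?(subsetP sSW) //; move/forall_inP: (SI a aS); apply.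
Qed.

Section SkewRank.
Local Open Scope ring_scope.

Definition skew_entry V a b : rat :=
  if arc o V a b then 1 else if arc o V b a then -1 else 0.

Definition skew_submx V p q (r : 'I_p -> T) (c : 'I_q -> T) : 'M[rat]_(p, q) :=
  \matrix_(i, j) skew_entry V (r i) (c j).

Lemma skew_adjE V : skew_adj o V = skew_submx V enum_val enum_val.
Proof. by apply/matrixP=> i j; rewrite !mxE. Qed.

Lemma skew_entry_subset V W a b :
  W \subset V -> a \in W -> b \in W -> skew_entry W a b = skew_entry V a b.
Proof. by move=> sWV aW bW; rewrite /skew_entry !(arc_subset sWV). Qed.

Lemma skew_entry_eq0 V a b : ~~ adj o V a b -> skew_entry V a b = 0.
Proof. by rewrite /skew_entry /adj negb_or => /andP[/negbTE-> /negbTE->]. Qed.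

Lemma skew_entry_neq0 V a b : adj o V a b -> skew_entry V a b != 0.
Proof. by rewrite /skew_entry /adj; case: (arc o V a b) => //= ->. Qed.

Lemma rank_skew_submx V p q (r : 'I_p -> T) (c : 'I_q -> T) :
  (forall i, r i \in V) -> (forall j, c j \in V) ->
  (\rank (skew_submx V r c) <= skew_rank o V)%N.
Proof.
move=> rV cV; case: (pickP (mem V)) => [a aV|V0]; last first.
  case: p r rV => [|p] r rV; first exact: leq_trans (rank_leq_row _) _.
  by move: (V0 (r ord0)); rewrite /= rV.
have -> : skew_submx V r c =
          mxsub (enum_rank_in aV \o r) (enum_rank_in aV \o c) (skew_adj o V).
  by apply/matrixP=> i j; rewrite !mxE /= !enum_rankK_in.
exact: mxrank_mxsub.
Qed.

Lemma skew_rank_subset V W : W \subset V -> (skew_rank o W <= skew_rank o V)%N.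
Proof.
move=> sWV; have memV (i : 'I_#|W|) : enum_val i \in V := subsetP sWV _ (enum_valP i).
rewrite /skew_rank skew_adjE; apply: leq_trans (rank_skew_submx memV memV).
rewrite eq_leq //; congr (\rank _); apply/matrixP=> i j.
by rewrite !mxE (skew_entry_subset sWV) ?enum_valP.
Qed.

Lemma skew_rank_pendant V x y : degree o V y = 1 -> adj o V y x ->
  (2 + skew_rank o (V :\ y :\ x) <= skew_rank o V)%N.
Proof.
move=> dy yx; have Ny := degree1_adjE dy yx; have /andP[yV xV] := adj_mem yx.
set W := V :\ y :\ x; have sWV : W \subset V.
  exact: subset_trans (subD1set _ x) (subD1set V y).
pose w := @enum_val _ (mem W); have wV l : w l \in V := subsetP sWV _ (enum_valP l).
have y_nadj_w l : ~~ adj o V y (w l).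
  by rewrite Ny; have := enum_valP l; rewrite !inE => /andP[].
pose r := ord_cons y (ord_cons x w); pose c := ord_cons x (ord_cons y w).
have rV i : r i \in V by do 2!apply: (ord_consP (P := fun b => b \in V)) => //.
have cV j : c j \in V by do 2!apply: (ord_consP (P := fun b => b \in V)) => //.
apply: leq_trans (rank_skew_submx rV cV).
have -> : skew_rank o W = \rank (drsubmx (drsubmx (skew_submx V r c))).
  rewrite /skew_rank skew_adjE; congr (\rank _); apply/matrixP=> i j.
  by rewrite !mxE /r /c !ord_cons_rshift (skew_entry_subset sWV) ?enum_valP.
apply: mxrank_two_pivots.
- apply/matrixP=> i j; rewrite !mxE /r /c ord_cons_lshift ord_cons_rshift.
  rewrite skew_entry_eq0 // /ord_cons; case: split => // _; exact: adj_irrefl.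
- apply/matrixP=> i j; rewrite !mxE /r /c !ord_cons_rshift ord_cons_lshift.
  by rewrite skew_entry_eq0 // adjC.
- apply: contraNneq (skew_entry_neq0 yx) => /matrixP/(_ 0 0).
  by rewrite !mxE /r /c !ord_cons_lshift => ->.
apply: contraNneq (skew_entry_neq0 (etrans (adjC _ _ _) yx)) => /matrixP/(_ 0 0).
by rewrite !mxE /r /c !ord_cons_rshift !ord_cons_lshift => ->.
Qed.

End SkewRank.

Lemma path_end_on_cycle V a t :
  1 < degree o V a -> uniq (a :: t) -> path (adj o V) a t ->
  (forall w, adj o V a w -> w \in t) -> on_cycle o V a.
Proof.
case/card_gt1P=> w1 [w2 [/[!inE] aw1 aw2 w12]] a_t a_path nbrs_t.
case: t a_t a_path nbrs_t => [|h t] a_t a_path nbrs_t; first by have := nbrs_t _ aw1.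
have [w [aw wt wh]] : exists w, [/\ adj o V a w, w \in t & w != h].
  have [w1h|w1h] := eqVneq w1 h; last first.
    by exists w1; have := nbrs_t _ aw1; rewrite inE (negbTE w1h).
  exists w2; have := nbrs_t _ aw2; rewrite inE -w1h eq_sym (negbTE w12).
  by split; rewrite // eq_sym.
case/splitPr: wt a_t a_path => t1 t2 a_t a_path.
exists [:: a, h & rcons t1 w]; apply/and4P; split.
- by rewrite /= size_rcons.
- by move: a_t; rewrite -cats1 -(cat1s w t2) catA -!cat_cons cat_uniq => /andP[].
- rewrite /= rcons_path -cats1 cat_path last_cat /= (adjC V w) aw !andbT.
  by move: a_path; rewrite -cat_cons cat_path /= => /andP[/andP[-> ->] /andP[-> _]].
- exact: mem_head.
Qed.

Lemma min_degree2_on_cycle V : V != set0 -> (forall v, v \in V -> 1 < degree o V v) ->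
  exists2 v, v \in V & on_cycle o V v.
Proof.
case/set0Pn=> a0 a0V deg2.
suff ext t a : uniq (a :: t) -> path (adj o V) a t -> a \in V ->
               exists2 v, v \in V & on_cycle o V v by exact: (ext [::] a0).
have [n] := ubnP (#|T| - size t); elim: n t a => // n IH t a lt_n a_t a_path aV.
have [w /andP[aw w_new]|no_new] := pickP [pred w | adj o V a w & w \notin a :: t].
  have w_a_t : uniq (w :: a :: t) by rewrite cons_uniq w_new a_t.
  have sz : size (w :: a :: t) <= #|T| by move/card_uniqP: w_a_t => <-; apply: max_card.
  have /andP[_ wV] := adj_mem aw.
  by apply: (IH (a :: t) w) => //=; [move: lt_n sz => /=; lia | rewrite adjC aw].
exists a => //; apply: path_end_on_cycle (deg2 a aV) a_t a_path _ => w aw.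
have := no_new w; rewrite /= aw /= => /negbFE; rewrite inE => /orP[/eqP wa|//].
by move: aw; rewrite wa (negbTE (adj_irrefl _ _)).
Qed.

Definition lower_gap V : int :=
  ((skew_rank o V)%:Z + 2 * (alpha o V)%:Z + 2 * dim_cyc o V - 2 * (#|V|)%:Z)%R.

Lemma lower_optimalE V : lower_optimal o V <-> lower_gap V = 0%R.
Proof. by rewrite /lower_optimal /lower_gap; split=> ?; lia. Qed.

Lemma lower_gap_delv_cycle V v : on_cycle o V v -> (lower_gap (V :\ v) <= lower_gap V)%R.
Proof.
move=> v_cyc; have vV := on_cycle_mem v_cyc; have := nedges_ncomp_delv_cycle v_cyc.
have := skew_rank_subset (subD1set V v); have := alpha_subset (subD1set V v).
rewrite /lower_gap /dim_cyc (cardsD1 v V) vV; lia.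
Qed.

Lemma lower_gap_delv_isolated V v : v \in V -> degree o V v = 0 ->
  (lower_gap (V :\ v) <= lower_gap V)%R.
Proof.
move=> vV /eqP; rewrite cards_eq0 => /eqP v_isolated.
have v_nadj u : u \in V :\ v -> ~~ adj o V v u.
  by move=> _; apply/negP=> vu; have := in_set0 u; rewrite -v_isolated inE vu.
have := alpha_lt_nonadj (subD1set V v) vV (negbT (setD11 v V)) v_nadj.
have := nedges_ncomp_delv vV; have := skew_rank_subset (subD1set V v).
rewrite /lower_gap /dim_cyc (cardsD1 v V) vV; lia.
Qed.

(* [k] is how much deleting [x] alone lowers |E| + ω: at least 1, and at least 2
   when [x] lies on a cycle. *)
Lemma lower_gap_pendant V x y k : degree o V y = 1 -> adj o V y x ->
  nedges o (V :\ x) + ncomp o (V :\ x) + k <= nedges o V + ncomp o V ->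
  (lower_gap (V :\ y :\ x) + 2 * k%:Z <= lower_gap V + 2)%R.
Proof.
move=> dy yx del_x; have Ny := degree1_adjE dy yx; have /andP[yV xV] := adj_mem yx.
have xy : x != y by apply: contraTneq yx => ->; apply: adj_irrefl.
have sWV : V :\ y :\ x \subset V := subset_trans (subD1set _ x) (subD1set V y).
have cardV : #|V| = (#|V :\ y :\ x| + 2)%N.
  by rewrite (cardsD1 y V) yV (cardsD1 x (V :\ y)) !inE xy xV; lia.
have del_y : (nedges o (V :\ y :\ x) + ncomp o (V :\ y :\ x)
              < nedges o (V :\ x) + ncomp o (V :\ x))%N.
  have -> : V :\ y :\ x = V :\ x :\ y by rewrite !setDDl setUC.
  by rewrite nedges_ncomp_delv // !inE eq_sym xy.
have y_nadj u : u \in V :\ y :\ x -> ~~ adj o V y u.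
  by rewrite Ny !inE => /andP[].
have := alpha_lt_nonadj sWV yV _ y_nadj; rewrite !inE eqxx andbF => /(_ isT).
have := skew_rank_pendant dy yx.
rewrite /lower_gap /dim_cyc cardV; lia.
Qed.

Lemma lower_gap_del_pendant V x y : degree o V y = 1 -> adj o V y x ->
  (lower_gap (V :\ y :\ x) <= lower_gap V)%R.
Proof.
move=> dy yx; have /andP[_ xV] := adj_mem yx.
have := lower_gap_pendant (k := 1) dy yx; rewrite addn1 => /(_ (nedges_ncomp_delv xV)).
lia.
Qed.

Lemma lower_gap_ge0 V : (0 <= lower_gap V)%R.
Proof.
have [n] := ubnP #|V|; elim: n V => // n IH V /ltnSE leVn.
have [->|V_neq0] := eqVneq V set0.
  by rewrite /lower_gap /dim_cyc cards0; lia.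
have IHD1 v : v \in V -> (0 <= lower_gap (V :\ v))%R.
  by move=> vV; apply: IH; rewrite (cardsD1 v V) vV in leVn.
case: (pickP [pred v in V | degree o V v <= 1]) => [v /andP[vV]|deg2]; last first.
  have deg_gt1 v : v \in V -> 1 < degree o V v.
    by move=> vV; move/negbT: (deg2 v); rewrite /= vV -ltnNge.
  have [v vV v_cyc] := min_degree2_on_cycle V_neq0 deg_gt1.
  exact: le_trans (IHD1 v vV) (lower_gap_delv_cycle v_cyc).
rewrite leq_eqVlt ltnS leqn0 => /orP[/eqP dv1|/eqP dv0]; last first.
  exact: le_trans (IHD1 v vV) (lower_gap_delv_isolated vV dv0).
have [x vx] : exists x, adj o V v x.
  by move/eqP: dv1 => /cards1P[x Nv]; exists x; have := set11 x; rewrite -Nv inE.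
apply: le_trans (lower_gap_del_pendant dv1 vx); apply: IH.
apply: leq_ltn_trans (subset_leq_card (subD1set _ x)) _.
by rewrite (cardsD1 v V) vV in leVn.
Qed.

End OrientedGraph.

Theorem lemma2p6 (T : finType) (o : rel T) (V : {set T}) (x y : T) :
  oriented o ->
  lower_optimal o V ->
  y \in V -> degree o V y = 1 -> adj o V y x ->
  ~ on_cycle o V x /\ lower_optimal o (V :\ y :\ x).
Proof.
move=> o_oriented /lower_optimalE gapV _ dy yx.
have gapW := lower_gap_ge0 o_oriented (V :\ y :\ x).
split=> [x_cyc|].
  have := lower_gap_pendant o_oriented dy yx (nedges_ncomp_delv_cycle o_oriented x_cyc).
  by rewrite gapV; lia.
by apply/lower_optimalE; have := lower_gap_del_pendant o_oriented dy yx; rewrite gapV; lia.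
Qed.
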